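(* Let ${\cal X}$ be finite with $|{\cal X}|\ge 2$, $f\sim\mathcal{GP}(0,k)$ with $k$ positive semidefinite, and let $\zeta_t$ be a random variable, independent of $f$ and of ${\cal D}_{t-1}$, following the shifted exponential distribution with shift $s_t=2\log(|{\cal X}|/2)$ and rate $\lambda=1/2$. Let $\mathbf{x}^*=\arg\max_{\mathbf{x}\in{\cal X}}f(\mathbf{x})$. Then for every $t\ge1$ and any given ${\cal D}_{t-1}$, $$\mathbb{E}\bigl[f(\mathbf{x}^* )\mid{\cal D}_{t-1}\bigr]\le \mathbb{E}\Bigl[\max_{\mathbf{x}\in{\cal X}}\ \mu_{t-1}(\mathbf{x})+\zeta_t^{1/2}\sigma_{t-1}(\mathbf{x})\ \Big|\ {\cal D}_{t-1}\Bigr].$$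
   Context: Observation model: $y_i=f(\mathbf{x}_i)+\epsilon_i$ with $\epsilon_i\sim\mathcal N(0,\sigma^2)$ i.i.d., $\sigma^2>0$, independent of $f$; ${\cal D}_{t-1}=\{(\mathbf{x}_i,y_i)\}_{i=1}^{t-1}$; $\mu_{t-1},\sigma^2_{t-1}$ denote the GP posterior mean and variance of $f$ given ${\cal D}_{t-1}$ (standard GP regression formulas with noise variance $\sigma^2$). The shifted exponential distribution with shift $s$ and rate $\lambda$ is the law of $s+Z$ with $Z\sim\mathrm{Exp}(\lambda)$, i.e. density $\lambda e^{-\lambda(\zeta-s)}$ for $\zeta\ge s$ and $0$ otherwise. *)

From HB Require Import structures.
From mathcomp Require Import all_boot all_order all_algebra.
From mathcomp Require Import all_classical all_reals all_analysis.
Set Implicit Arguments. Unset Strict Implicit. Unset Printing Implicit Defensive.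
Import Order.TTheory GRing.Theory Num.Theory.
Import numFieldNormedType.Exports.
Local Open Scope classical_set_scope.
Local Open Scope ring_scope.

(* Maximum of a real function over a (nonempty) finite type:
   max_{x in X} g x.  (For an empty X it returns 0, a case never used.) *)
Definition fmax {R : realType} {X : finType} (g : X -> R) : R :=
  match enum X with
  | [::] => 0
  | x0 :: s => \big[Num.max/g x0]_(y <- s) g y
  end.

Definition psd_kernel {R : realType} {X : finType} (k : X -> X -> R) : Prop :=
  (forall x y, k x y = k y x) /\
  (forall a : X -> R, 0 <= \sum_x \sum_y a x * a y * k x y).

Section GPPosterior.
Context {R : realType} {X : finType} (k : X -> X -> R) (noise2 : R)
        (n : nat) (xs : 'I_n -> X) (ys : 'I_n -> R).

Definition gp_Kreg : 'M[R]_n :=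
  \matrix_(i, j) k (xs i) (xs j) + noise2 *: 1%:M.
Definition gp_kvec (x : X) : 'cV[R]_n := \col_i k (xs i) x.
Definition gp_yvec : 'cV[R]_n := \col_i ys i.

Definition gp_mean (x : X) : R :=
  ((gp_kvec x)^T *m invmx gp_Kreg *m gp_yvec) 0 0.
Definition gp_cov (x x' : X) : R :=
  k x x' - ((gp_kvec x)^T *m invmx gp_Kreg *m gp_kvec x') 0 0.
Definition gp_sd (x : X) : R := Num.sqrt (gp_cov x x).
End GPPosterior.

Definition gauss_law {R : realType} (m s : R) : set R -> \bar R :=
  if s == 0 then \d_m else normal_prob m s.

Section RandomVectors.
Context {d : measure_display} {Omega : measurableType d} {R : realType}
        (P : probability Omega R).

Definition gaussian_vector {X : finType} (F : Omega -> X -> R)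
    (m : X -> R) (C : X -> X -> R) : Prop :=
  (forall x, measurable_fun setT (fun w => F w x)) /\
  (forall (a : X -> R) (A : set R), measurable A ->
     P [set w | \sum_x a x * F w x \in A] =
     gauss_law (\sum_x a x * m x)
               (Num.sqrt (\sum_x \sum_y a x * a y * C x y)) A).

Definition shifted_exponential (Z : Omega -> R) (s lam : R) : Prop :=
  measurable_fun setT Z /\
  (forall A : set R, measurable A ->
     P [set w | Z w - s \in A] = exponential_prob lam A).
End RandomVectors.

From HB Require Import structures.
From mathcomp Require Import all_boot all_order all_algebra.
From mathcomp Require Import all_classical all_reals all_analysis.
From mathcomp Require Import measurable_realfun ring lra.
Import Order.TTheory GRing.Theory Num.Theory.
Import numFieldNormedType.Exports.
Local Open Scope classical_set_scope.
Local Open Scope ring_scope.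

(* Let [M0 = max_x mu x], fix [T = M0 + r] with [r >= 0], and let [c >= 0] be the
   largest scale with [mu + c sigma <= T] on [X]; it is attained at a point with
   [sigma > 0].  The union bound and the Gaussian tail [P(N(0,1) > c) <=
   exp(-c^2/2)/2] give [P(max F > T) <= min(1, |X| exp(-c^2/2)/2)], whereas
   [max (mu + sqrt zeta sigma) > T] as soon as [zeta > c^2], an event of
   probability [min(1, exp(-(c^2 - s)/2))]: the same number, since
   [s = 2 ln(|X|/2)].  (If [sigma] vanishes identically, [P(max F > T) = 0].)
   Both sides are at least [M0] once [max F] is replaced by [max(max F, M0)], so
   comparing tails above [M0] compares expectations (layer-cake formula). *)

Lemma bigmax_seq_attained {R : realType} {I : eqType} (g : I -> R) x0 s :
  exists2 z, z \in x0 :: s & \big[Num.max/g x0]_(y <- s) g y = g z.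
Proof.
elim: s => [|a s [z zs IH]]; first by exists x0; rewrite ?big_nil ?mem_head.
rewrite big_cons IH; case: (leP (g a) (g z)) => gaz.
- by exists z => //; rewrite !inE in zs *; case/orP: zs => ->; rewrite ?orbT.
- by exists a; rewrite // !inE eqxx orbT.
Qed.

Lemma fmax_ge {R : realType} {X : finType} (g : X -> R) x : g x <= fmax g.
Proof.
rewrite /fmax; have : x \in enum X by rewrite mem_enum.
case: (enum X) => [//|x0 s]; rewrite inE => /predU1P[->|xs].
- exact: bigmax_ge_id.
- exact: le_bigmax_seq.
Qed.

Lemma fmax_attained {R : realType} {X : finType} (g : X -> R) (x1 : X) :
  exists z, fmax g = g z.
Proof.
rewrite /fmax; have : x1 \in enum X by rewrite mem_enum.
case: (enum X) => [//|x0 s] _.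
by have [z _ ->] := bigmax_seq_attained g x0 s; exists z.
Qed.

Lemma fmax_gtP {R : realType} {X : finType} (g : X -> R) (x1 : X) r :
  r < fmax g <-> exists x, r < g x.
Proof.
split; first by have [z ->] := fmax_attained g x1; exists z.
by case=> x /lt_le_trans; apply; exact: fmax_ge.
Qed.

Lemma le_fmax {R : realType} {X : finType} (g h : X -> R) (x1 : X) :
  (forall x, g x <= h x) -> fmax g <= fmax h.
Proof.
by move=> gh; have [z ->] := fmax_attained g x1; exact: le_trans (gh z) (fmax_ge _ _).
Qed.

Lemma measurable_fmax {d} {T : measurableType d} {R : realType} {X : finType}
    (F : T -> X -> R) :
  (forall x, measurable_fun setT (fun w => F w x)) ->
  measurable_fun setT (fun w => fmax (F w)).
Proof.
move=> mF; rewrite /fmax; case: (enum X) => [|x0 s]; first exact: measurable_cst.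
elim: s => [|a s IH].
  by apply: (eq_measurable_fun (fun w => F w x0)) => // w _; rewrite big_nil.
apply: (eq_measurable_fun (fun w =>
    Num.max (F w a) (\big[Num.max/F w x0]_(y <- s) F w y))).
  by move=> w _; rewrite big_cons.
exact: measurable_maxr.
Qed.

Lemma measurable_ltr_fun {d} {T : measurableType d} {R : realType}
    (f : T -> R) (a : R) :
  measurable_fun setT f -> measurable [set w | a < f w].
Proof.
move=> mf; have -> : [set w | a < f w] = f @^-1` `]a, +oo[.
  by apply/funext => w /=; rewrite in_itv /= andbT.
by rewrite -[X in measurable X]setTI; exact: mf.
Qed.

Lemma measure_bigsetU_le {d} {T : measurableType d} {R : realType}
    (mu : {measure set T -> \bar R}) {I : Type} (s : seq I) (E : I -> set T) :
  (forall i, measurable (E i)) ->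
  (mu (\big[setU/set0]_(i <- s) E i) <= \sum_(i <- s) mu (E i))%E.
Proof.
move=> mE; elim: s => [|a s IH]; first by rewrite !big_nil measure0.
rewrite !big_cons; apply: le_trans (measureU2 _ _ _) _ => //.
  exact: bigsetU_measurable.
by rewrite leeD2l.
Qed.

Lemma le_integral_EFin {d} {T : measurableType d} {R : realType}
    (mu : {measure set T -> \bar R}) (f g : T -> R) :
  measurable_fun setT f -> measurable_fun setT g -> (forall w, f w <= g w) ->
  (\int[mu]_w (f w)%:E <= \int[mu]_w (g w)%:E)%E.
Proof.
move=> mf mg fg.
have mF : measurable_fun setT (EFin \o f) by apply/measurable_EFinP.
have mG : measurable_fun setT (EFin \o g) by apply/measurable_EFinP.
rewrite [X in (X <= _)%E]integralE [X in (_ <= X)%E]integralE.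
apply: leeB; apply: ge0_le_integral => //=.
all: first [ exact: measurable_funepos | exact: measurable_funeneg
  | (by move=> x _; apply: funepos_ge0) | (by move=> x _; apply: funeneg_ge0)
  | idtac ].
- by move=> x _; rewrite !funeposE /= ge_max !le_max lexx orbT andbT lee_fin fg.
- move=> x _; rewrite !funenegE /= ge_max !le_max lexx orbT andbT.
  by rewrite lee_fin lerN2 fg.
Qed.

Section ProbabilityIntegrals.
Context {d} {T : measurableType d} {R : realType} (P : probability T R).

(* A function bounded below has a finite negative part under [P], so failing to
   be integrable forces its positive part, hence its integral, to be [+oo]. *)
Lemma nonintegrable_integral_pinfty (h : T -> R) (b : R) :
  measurable_fun setT h -> (forall w, b <= h w) ->
  ~ P.-integrable setT (EFin \o h) -> (\int[P]_w (h w)%:E = +oo)%E.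
Proof.
move=> mh hb nint.
have mH : measurable_fun setT (EFin \o h) by apply/measurable_EFinP.
have neg_le : (\int[P]_w ((EFin \o h)^\- w) <= (Num.max (- b) 0)%:E)%E.
  rewrite -[X in (_ <= X)%E]mule1 -(probability_setT P) -integral_cst //.
  apply: ge0_le_integral => //=.
  all: first [ exact: measurable_funeneg | (by move=> x _; apply: funeneg_ge0)
    | idtac ].
  move=> x _; rewrite funenegE /= ge_max !lee_fin !le_max lexx orbT andbT.
  by rewrite lerN2 hb.
have neg_fin : (\int[P]_w ((EFin \o h)^\- w) \is a fin_num)%E.
  rewrite ge0_fin_numE; first by apply: le_lt_trans neg_le _; rewrite ltry.
  by apply: integral_ge0 => x _; apply: funeneg_ge0.
have pos_oo : (\int[P]_w ((EFin \o h)^\+ w) = +oo)%E.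
  apply/eqP; rewrite eq_le leey /=; apply/negPn/negP => pos_lt.
  apply: nint; apply/integrableP; split => //.
  under eq_integral do rewrite -/((abse \o (EFin \o h)) _) fune_abse.
  rewrite ge0_integralD //=.
  all: first [ exact: measurable_funepos | exact: measurable_funeneg
    | (by move=> x _; apply: funepos_ge0) | (by move=> x _; apply: funeneg_ge0)
    | idtac ].
  apply: lte_add_pinfty; first by rewrite ltNge.
  by apply: le_lt_trans neg_le _; rewrite ltry.
rewrite integralE pos_oo.
by move: neg_fin; case: (\int[P]_w ((EFin \o h)^\- w))%E.
Qed.

Lemma ge0_integralD_cst (g : T -> R) (c : R) :
  measurable_fun setT g -> (forall w, 0 <= g w) ->
  (\int[P]_w (g w + c)%:E = \int[P]_w (g w)%:E + c%:E)%E.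
Proof.
move=> mg g0.
have ic : P.-integrable setT (EFin \o cst c) by exact: finite_measure_integrable_cst.
have [ig|nig] := pselect (P.-integrable setT (EFin \o g)).
  under eq_integral do rewrite EFinD.
  rewrite integralD // integral_cst //; congr (_ + _)%E.
  by rewrite -[RHS]mule1; congr (_ * _)%E; exact: probability_setT.
rewrite (@nonintegrable_integral_pinfty g 0 mg g0 nig).
rewrite (@nonintegrable_integral_pinfty _ c) //.
- by apply: measurable_funD => //; exact: measurable_cst.
- by move=> w; rewrite lerDr.
move=> igc; apply: nig.
have := integrableD measurableT igc (finite_measure_integrable_cst P (- c) measurableT).
by congr (P.-integrable _ _); apply/funext => w /=; rewrite -EFinD addrK.
Qed.

Lemma ge0_le_integral_tail (f g : T -> R) :
  measurable_fun setT f -> measurable_fun setT g ->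
  (forall w, 0 <= f w) -> (forall w, 0 <= g w) ->
  (forall r, 0 <= r -> (P [set w | (r < f w)%R] <= P [set w | (r < g w)%R])%E) ->
  (\int[P]_w (f w)%:E <= \int[P]_w (g w)%:E)%E.
Proof.
move=> mf mg f0 g0 tail_le.
have Pf : f \in mfun by rewrite inE.
have Pg : g \in mfun by rewrite inE.
pose Xf : {RV P >-> R} := mfun_Sub Pf.
pose Xg : {RV P >-> R} := mfun_Sub Pg.
have -> : (\int[P]_w (f w)%:E = 'E_P[Xf])%E.
  by rewrite expectation_def /Xf mfun_valP.
have -> : (\int[P]_w (g w)%:E = 'E_P[Xg])%E.
  by rewrite expectation_def /Xg mfun_valP.
rewrite ge0_expectation_ccdf; last by move=> w; rewrite /Xf mfun_valP.
rewrite ge0_expectation_ccdf; last by move=> w; rewrite /Xg mfun_valP.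
apply: ge0_le_integral => //.
- exact: measurable_funS (ccdf_measurable Xf).
- exact: measurable_funS (ccdf_measurable Xg).
move=> r /=; rewrite in_itv /= andbT => r0.
rewrite /ccdf /distribution /pushforward /Xf /Xg !mfun_valP.
have preE (h : T -> R) : h @^-1` `]r, +oo[ = [set w | r < h w].
  by apply/funext => w /=; rewrite in_itv /= andbT.
by rewrite !preE; exact: tail_le.
Qed.

Lemma le_integral_tail (f g : T -> R) (a : R) :
  measurable_fun setT f -> measurable_fun setT g ->
  (forall w, a <= f w) -> (forall w, a <= g w) ->
  (forall r, 0 <= r -> (P [set w | (a + r < f w)%R] <= P [set w | (a + r < g w)%R])%E) ->
  (\int[P]_w (f w)%:E <= \int[P]_w (g w)%:E)%E.
Proof.
move=> mf mg af ag tail_le.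
have mfa : measurable_fun setT (fun w => f w - a).
  by apply: measurable_funD => //; exact: measurable_cst.
have mga : measurable_fun setT (fun w => g w - a).
  by apply: measurable_funD => //; exact: measurable_cst.
have fa0 w : 0 <= f w - a by rewrite subr_ge0.
have ga0 w : 0 <= g w - a by rewrite subr_ge0.
under eq_integral do rewrite -(subrK a (f _)).
under [X in (_ <= X)%E]eq_integral do rewrite -(subrK a (g _)).
rewrite (ge0_integralD_cst _ _ mfa fa0) (ge0_integralD_cst _ _ mga ga0) leeD2r //.
apply: ge0_le_integral_tail => // r r0.
have shiftE (h : T -> R) : [set w | r < h w - a] = [set w | a + r < h w].
  by apply/funext => w /=; rewrite ltrBrDl.
by rewrite !shiftE; exact: tail_le.
Qed.
End ProbabilityIntegrals.

Section NormalTail.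
Context {R : realType}.

Lemma derive1_affine (b k : R) : (fun y : R => (y + b) * k)^`()%classic = cst k.
Proof.
apply/funext => x; rewrite derive1E deriveM // deriveD // derive_cst.
by rewrite derive_id derive_cst addr0 scaler0 add0r /GRing.scale /= mulr1.
Qed.

Lemma normal_exponent_tail_le (s c x : R) : 0 < s -> 0 <= c -> 0 <= x ->
  - (x * (Num.sqrt 2 * s) + c * s) ^+ 2 / (s ^+ 2 *+ 2) <= - c ^+ 2 / 2 - x ^+ 2.
Proof.
move=> s0 c0 x0; set r := Num.sqrt 2.
have r2 : r ^+ 2 = 2 by rewrite sqr_sqrtr.
have -> : - (x * (r * s) + c * s) ^+ 2 / (s ^+ 2 *+ 2) = - (x * r + c) ^+ 2 / 2.
  by field; rewrite gt_eqF.
have xrc0 : 0 <= x * r * c by rewrite !mulr_ge0 ?sqrtr_ge0.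
have -> : (x * r + c) ^+ 2 = 2 * x ^+ 2 + 2 * (x * r * c) + c ^+ 2.
  by rewrite sqrrD exprMn r2; ring.
lra.
Qed.

Lemma normal_pdf_shift_le (m s c x : R) : 0 < s -> 0 <= c -> 0 <= x ->
  normal_pdf m s (m + c * s + x * (Num.sqrt 2 * s)) * (Num.sqrt 2 * s) <=
  normal_peak s * (Num.sqrt 2 * s) * expR (- c ^+ 2 / 2) * gauss_fun x.
Proof.
move=> s0 c0 x0; rewrite normal_pdfE ?gt_eqF // /normal_fun /gauss_fun.
have -> : m + c * s + x * (Num.sqrt 2 * s) - m = x * (Num.sqrt 2 * s) + c * s.
  by ring.
rewrite mulrAC -!mulrA; apply: ler_wpM2l; first exact: normal_peak_ge0.
apply: ler_wpM2l; first exact: sqrtr_ge0.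
apply: ler_wpM2l; first exact: ltW.
by rewrite -expRD ler_expR; apply: normal_exponent_tail_le.
Qed.

Lemma normal_peak_scale (s : R) : 0 < s ->
  normal_peak s * (Num.sqrt 2 * s) * Num.sqrt pi = 1.
Proof.
move=> s0; rewrite /normal_peak.
have -> : s ^+ 2 * pi *+ 2 = s ^+ 2 * (pi * 2) by rewrite -mulrnAr mulr_natr.
rewrite (sqrtrM (pi * 2) (sqr_ge0 s)) (sqrtrM 2 (pi_ge0 R)).
rewrite (sqrtr_sqr s) (ger0_norm (ltW s0)).
have pi0 : Num.sqrt pi != 0 :> R by rewrite gt_eqF // sqrtr_gt0 pi_gt0.
have sqrt20 : Num.sqrt 2 != 0 :> R by rewrite gt_eqF // sqrtr_gt0.
by field; rewrite pi0 sqrt20 gt_eqF.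
Qed.

(* Substituting [y = m + c s + x sqrt2 s] and completing the square bound the
   tail by [exp (- c^2 / 2)] times the half-line Gaussian integral. *)
Lemma normal_prob_tail_le (m s c : R) : 0 < s -> 0 <= c ->
  (normal_prob m s `](m + c * s)%R, +oo[ <= (2^-1 * expR (- c ^+ 2 / 2))%:E)%E.
Proof.
move=> s0 c0; set k := Num.sqrt 2 * s.
have k0 : 0 < k by rewrite mulr_gt0 // sqrtr_gt0.
pose F y := (y + (m + c * s) / k) * k.
have F'E : F^`()%classic = cst k by exact: derive1_affine.
have FE x : F x = m + c * s + x * k by rewrite /F mulrDl divfK ?gt_eqF // addrC.
have mF : measurable_fun setT F.
  by apply: measurable_funM => //; apply: measurable_funD => //.
have mgauss : measurable_fun setT (fun x => (gauss_fun x)%:E : \bar R).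
  by apply/measurable_EFinP; exact: measurable_gauss_fun.
rewrite /normal_prob.
apply: (@le_trans _ _ (\int[lebesgue_measure]_(x in `[(m + c * s)%R, +oo[)
   (normal_pdf m s x)%:E)%E).
  apply: ge0_subset_integral => //=.
  - by apply/measurable_EFinP; exact: measurable_funTS (measurable_normal_pdf m s).
  - by move=> x _; rewrite lee_fin normal_pdf_ge0.
  - by apply: subset_itvr; rewrite bnd_simp.
have -> : m + c * s = F 0 by rewrite FE mul0r addr0.
rewrite increasing_ge0_integration_by_substitutiony //; first last.
- by move=> x _; apply: normal_pdf_ge0.
- by apply: continuous_subspaceT; apply: continuous_normal_pdf; rewrite gt_eqF.
- by apply: gt0_cvgMly => //; exact: cvg_addrr.
- split; first by move=> x _; exact: ex_derive.
  apply: cvg_at_right_filter; apply: cvgM; last exact: cvg_cst.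
  by apply: cvgD; [exact: cvg_id | exact: cvg_cst].
- by rewrite F'E; exact: is_cvg_cst.
- by rewrite F'E; exact: is_cvg_cst.
- by rewrite F'E => x _; exact: cst_continuous.
- by move=> x y _ _ xy; rewrite /F ltr_pM2r // ltrD2r.
rewrite F'E.
apply: (@le_trans _ _ (\int[lebesgue_measure]_(x in `[0%R, +oo[)
  ((normal_peak s * k * expR (- c ^+ 2 / 2))%:E * (gauss_fun x)%:E))%E).
  apply: ge0_le_integral => //=.
  - by move=> x _; rewrite lee_fin mulr_ge0 // ?normal_pdf_ge0 // ltW.
  - apply/measurable_EFinP; apply: measurable_funTS; apply: measurable_funM.
      exact: measurableT_comp (measurable_normal_pdf m s) mF.
    exact: measurable_cst.
  - exact/measurable_funTS/measurable_funeM.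
  move=> x; rewrite /= in_itv /= andbT => x0.
  rewrite -EFinM lee_fin.
  change (normal_pdf m s (F x) * k <=
    normal_peak s * k * expR (- c ^+ 2 / 2) * gauss_fun x).
  by rewrite FE; exact: normal_pdf_shift_le.
rewrite ge0_integralZl //=.
- rewrite integral0y_gauss -EFinM lee_fin le_eqVlt; apply/orP; left; apply/eqP.
  rewrite -[RHS]mul1r -(normal_peak_scale _ s0) -/k; ring.
- exact: measurable_funTS.
- by move=> x _; rewrite lee_fin gauss_fun_ge0.
- by rewrite lee_fin !mulr_ge0 ?expR_ge0 ?normal_peak_ge0 // ltW.
Qed.
End NormalTail.

Lemma gauss_law0_tail {R : realType} (m T : R) :
  m <= T -> gauss_law m 0 `]T, +oo[ = 0%E.
Proof.
move=> mT; rewrite /gauss_law eqxx diracE memNset //= in_itv /= andbT.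
by rewrite ltNge mT.
Qed.

Lemma gauss_law_tail_le {R : realType} (m s c T : R) : 0 <= s -> 0 <= c ->
  m + c * s <= T -> (gauss_law m s `]T, +oo[ <= (2^-1 * expR (- c ^+ 2 / 2))%:E)%E.
Proof.
move=> s0 c0; have [->|sn0] := eqVneq s 0.
  by rewrite mulr0 addr0 => mT; rewrite gauss_law0_tail // lee_fin mulr_ge0 ?expR_ge0.
move=> msT.
have sp : 0 < s by rewrite lt_def sn0 s0.
rewrite /gauss_law (negbTE sn0).
apply: le_trans (normal_prob_tail_le _ _ _ sp c0).
by apply: le_measure; rewrite ?inE //=; apply: subset_itvr; rewrite bnd_simp.
Qed.

Section ExponentialTail.
Context {R : realType} (r : R).
Hypothesis r0 : 0 < r.

Lemma exponential_prob_tail (a : R) : 0 <= a ->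
  exponential_prob r `[a, +oo[ = (expR (- r * a))%:E.
Proof.
move=> a0.
have cexpNM : continuous (fun z : R^o => expR (- r * z)).
  move=> z; apply: continuous_comp; last exact: continuous_expR.
  by apply: continuousM => //; apply: (@continuousN _ R^o); exact: cst_continuous.
rewrite /exponential_prob (@ge0_continuous_FTC2y _ _ (fun x => - expR (- r * x)) a 0).
- by rewrite sub0e EFinN oppeK.
- by move=> x _; apply: exponential_pdf_ge0; exact: ltW.
- apply: (@continuous_subspaceW R^o _ _ [set` `[0, +oo[%R]).
    by apply: subset_itvr; rewrite bnd_simp.
  exact: within_continuous_exponential_pdf.
- rewrite -oppr0; apply: cvgN.
  rewrite (_ : (fun x => expR (- r * x)) =
               (fun z => expR (- z)) \o (fun z => r * z)); last first.
    by apply: eq_fun => x; rewrite mulNr.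
  apply: (@cvg_comp _ _ _ _ _ _ (pinfty_nbhs R)); last exact: cvgr_expR.
  exact: gt0_cvgMry.
- by move=> x _; exact: ex_derive.
- by apply: cvgN; apply/cvg_at_right_filter; exact: cexpNM.
- move=> x; rewrite in_itv /= andbT => ax.
  by apply: derive1_exponential_pdf; rewrite in_itv /= andbT (le_lt_trans a0).
Qed.

Lemma exponential_prob_tail_ge (a : R) :
  ((Num.min 1 (expR (- r * a)))%:E <= exponential_prob r `]a, +oo[)%E.
Proof.
have mpdf : measurable_fun setT (fun x => (exponential_pdf r x)%:E : \bar R).
  by apply/measurable_EFinP; exact: measurable_exponential_pdf.
have [a0|a_lt0] := leP 0 a.
  rewrite /exponential_prob integral_itv_obnd_cbnd; last exact: measurable_funS mpdf.
  by rewrite -/(exponential_prob r _) exponential_prob_tail // lee_fin ge_min lexx orbT.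
apply: (@le_trans _ _ (exponential_prob r `[0%R, +oo[)).
  by rewrite exponential_prob_tail // mulr0 expR0 lee_fin ge_min lexx.
apply: ge0_subset_integral => //=.
- exact: measurable_funS mpdf.
- by move=> x _; rewrite lee_fin exponential_pdf_ge0 // ltW.
- by apply: subset_itvr; rewrite bnd_simp.
Qed.
End ExponentialTail.

Lemma exists_tight_scale {R : realType} {X : finType} (m sd : X -> R) (T : R) :
  (forall x, 0 <= sd x) -> (forall x, m x <= T) -> (exists x, 0 < sd x) ->
  exists c, [/\ 0 <= c, forall x, m x + c * sd x <= T &
                exists2 x, 0 < sd x & m x + c * sd x = T].
Proof.
move=> sd0 mT [x0 sdx0].
have [xm sdxm xm_min] := @arg_minP _ _ _ x0 [pred x | 0 < sd x]
  (fun x => (T - m x) / sd x) sdx0.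
exists ((T - m xm) / sd xm); split.
- by rewrite divr_ge0 ?subr_ge0 // ltW.
- move=> x; have [sdx|] := ltP 0 (sd x).
    by rewrite -lerBrDl -ler_pdivlMr //; exact: xm_min.
  by move=> sdx_le0; rewrite (@le_anti _ _ (sd x) 0) ?sdx_le0 ?sd0 // mulr0 addr0.
- by exists xm => //; rewrite divfK ?gt_eqF // subrKC.
Qed.

Lemma lt_fmax_ucb {R : realType} {X : finType} (m sd : X -> R) (xm : X) (c z : R) :
  0 < sd xm -> 0 <= c -> c ^+ 2 < z ->
  m xm + c * sd xm < fmax (fun x => m x + Num.sqrt z * sd x).
Proof.
move=> sdxm c0 cz; apply/(fmax_gtP _ xm); exists xm.
rewrite ltrD2l ltr_pM2r // -(ger0_norm c0) -sqrtr_sqr ltr_sqrt //.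
exact: le_lt_trans (sqr_ge0 c) cz.
Qed.

Lemma shifted_exponential_tail_ge {d} {Omega : measurableType d} {R : realType}
    {P : probability Omega R} {Z : Omega -> R} {s lam : R} (a : R) :
  shifted_exponential P Z s lam -> 0 < lam ->
  ((Num.min 1 (expR (- lam * (a - s))))%:E <= P [set w | (a < Z w)%R])%E.
Proof.
move=> [_ Z_law] lam0.
have -> : [set w | (a < Z w)%R] = [set w | Z w - s \in `](a - s), +oo[%classic].
  by apply/funext => w /=; rewrite in_setE /= in_itv /= andbT ltrD2r.
rewrite Z_law; last exact: measurable_itv.
exact: exponential_prob_tail_ge.
Qed.

Section GaussianMaxima.
Context {R : realType} {X : finType} {d : measure_display} {Omega : measurableType d}.
Variables (P : probability Omega R) (x1 : X).
Variables (F : Omega -> X -> R) (m : X -> R) (C : X -> X -> R).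
Hypothesis gaussF : gaussian_vector P F m C.

Let sd x := Num.sqrt (C x x).
Let N : R := #|X|%:R.

Lemma gaussian_vector_marginal x (A : set R) : measurable A ->
  P [set w | F w x \in A] = gauss_law (m x) (sd x) A.
Proof.
have delta_sum (G : X -> R) : \sum_y (y == x)%:R * G y = G x.
  rewrite (bigD1 x) //= eqxx mul1r big1 ?addr0 // => y /negbTE ->.
  by rewrite mul0r.
move=> mA; have := gaussF.2 (fun y => (y == x)%:R) A mA.
have -> : \sum_x0 \sum_y (x0 == x)%:R * (y == x)%:R * C x0 y = C x x.
  rewrite -[RHS](delta_sum (fun x0 => C x0 x)); apply: eq_bigr => x0 _.
  rewrite -(delta_sum (fun y => (x0 == x)%:R * C x0 y)).
  by apply: eq_bigr => y _; ring.
rewrite delta_sum => <-; congr (P _); apply/funext => w /=.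
by rewrite delta_sum.
Qed.

Lemma gaussian_max_tail_le_sum (T : R) :
  (P [set w | (T < fmax (F w))%R] <= \sum_x gauss_law (m x) (sd x) `]T, +oo[)%E.
Proof.
have mF x : measurable_fun setT (fun w => F w x) by case: gaussF.
have mlt x : measurable [set w | (T < F w x)%R] by exact: measurable_ltr_fun.
apply: (@le_trans _ _ (P (\big[setU/set0]_x [set w | (T < F w x)%R]))).
  apply: le_measure; rewrite ?inE.
  - exact/measurable_ltr_fun/measurable_fmax.
  - exact: bigsetU_measurable.
  - by move=> w /(fmax_gtP _ x1)[x Tx]; rewrite (bigD1 x) //=; left.
apply: le_trans (measure_bigsetU_le P (index_enum X) _ mlt) _.
apply: lee_sum => x _; rewrite -gaussian_vector_marginal; last exact: measurable_itv.
suff -> : [set w | (T < F w x)%R] = [set w | F w x \in `]T, +oo[%classic] by [].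
by apply/funext => w /=; rewrite in_setE /= in_itv /= andbT.
Qed.

Lemma gaussian_max_tail_le (T c : R) : 0 <= c -> (forall x, m x + c * sd x <= T) ->
  (P [set w | (T < fmax (F w))%R] <=
   (Num.min 1 (N * (2^-1 * expR (- c ^+ 2 / 2))))%:E)%E.
Proof.
move=> c0 below; rewrite EFin_min le_min; apply/andP; split.
  apply: probability_le1; apply: measurable_ltr_fun; apply: measurable_fmax.
  by case: gaussF.
apply: le_trans (gaussian_max_tail_le_sum T) _.
apply: (@le_trans _ _ (\sum_(x : X) (2^-1 * expR (- c ^+ 2 / 2))%:E)%E).
  by apply: lee_sum => x _; apply: gauss_law_tail_le; rewrite ?sqrtr_ge0.
by rewrite sumEFin sumr_const /N mulr_natl.
Qed.

Variable zeta : Omega -> R.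
Hypothesis zeta_law : shifted_exponential P zeta (2 * ln (N / 2)) (2^-1).

Let ucb w := fmax (fun x => m x + Num.sqrt (zeta w) * sd x).

Lemma measurable_ucb : measurable_fun setT ucb.
Proof.
have msqrt : measurable_fun setT (fun w => Num.sqrt (zeta w)).
  exact: measurableT_comp (continuous_measurable_fun (@sqrt_continuous R)) zeta_law.1.
apply: measurable_fmax => x; apply: measurable_funD; first exact: measurable_cst.
by apply: measurable_funM => //; exact: measurable_cst.
Qed.

Lemma ucb_tail_ge (T c : R) (xm : X) :
  0 < sd xm -> 0 <= c -> m xm + c * sd xm = T ->
  ((Num.min 1 (N * (2^-1 * expR (- c ^+ 2 / 2))))%:E <=
   P [set w | (T < ucb w)%R])%E.
Proof.
move=> sdxm c0 <-.
have N0 : 0 < N by rewrite ltr0n; apply/card_gt0P; exists x1.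
have shiftE : expR (- 2^-1 * (c ^+ 2 - 2 * ln (N / 2))) =
              N * (2^-1 * expR (- c ^+ 2 / 2)).
  rewrite (_ : - 2^-1 * _ = - c ^+ 2 / 2 + ln (N / 2)); last by field.
  by rewrite expRD lnK ?posrE ?divr_gt0 //; field.
rewrite -shiftE; apply: le_trans (shifted_exponential_tail_ge (c ^+ 2) zeta_law _) _.
  by rewrite invr_gt0.
apply: le_measure; rewrite ?inE.
- exact/measurable_ltr_fun/zeta_law.1.
- exact/measurable_ltr_fun/measurable_ucb.
- by move=> w /=; exact: lt_fmax_ucb.
Qed.

Lemma max_tail_le_ucb_tail (T : R) : fmax m <= T ->
  (P [set w | (T < fmax (F w))%R] <= P [set w | (T < ucb w)%R])%E.
Proof.
move=> mT; have m_le x : m x <= T := le_trans (fmax_ge m x) mT.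
have sd0 x : 0 <= sd x := sqrtr_ge0 _.
have [nondeg|deg] := pselect (exists x, 0 < sd x).
  have [c [c0 below [xm sdxm tight]]] := exists_tight_scale _ _ _ sd0 m_le nondeg.
  exact: le_trans (gaussian_max_tail_le _ _ c0 below) (ucb_tail_ge _ _ _ sdxm c0 tight).
apply: le_trans (gaussian_max_tail_le_sum T) _.
rewrite big1 ?measure_ge0 // => x _.
have -> : sd x = 0.
  by apply/eqP; rewrite eq_le sd0 andbT leNgt; apply/negP => ?; apply: deg; exists x.
exact: gauss_law0_tail.
Qed.

Theorem expectation_fmax_le_ucb :
  (\int[P]_w (fmax (F w))%:E <=
   \int[P]_w (fmax (fun x => m x + Num.sqrt (zeta w) * Num.sqrt (C x x)))%:E)%E.
Proof.
set m1 := fmax m; set Y := fun w => fmax (F w).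
have mY : measurable_fun setT Y by apply: measurable_fmax => x; case: gaussF.
have mYm1 : measurable_fun setT (fun w => Num.max (Y w) m1).
  by apply: measurable_maxr => //; exact: measurable_cst.
apply: (@le_trans _ _ (\int[P]_w (Num.max (Y w) m1)%:E)%E).
  by apply: le_integral_EFin => // w; rewrite le_max lexx.
apply: (@le_integral_tail _ _ _ P _ _ m1) => //.
- exact: measurable_ucb.
- by move=> w; rewrite le_max lexx orbT.
- by move=> w; apply: (le_fmax _ _ x1) => x; rewrite lerDl mulr_ge0 ?sqrtr_ge0.
move=> r r0.
have -> : [set w | (m1 + r < Num.max (Y w) m1)%R] = [set w | (m1 + r < Y w)%R].
  by apply/funext => w /=; rewrite lt_max [m1 + r < m1]ltNge lerDl r0 orbF.
by apply: max_tail_le_ucb_tail; rewrite lerDl.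
Qed.
End GaussianMaxima.

Theorem lemma4p2
  (R : realType) (X : finType) (k : X -> X -> R) (noise2 : R)
  (t : nat) (xs : 'I_t.-1 -> X) (ys : 'I_t.-1 -> R)
  (d : measure_display) (Omega : measurableType d) (P : probability Omega R)
  (F : Omega -> X -> R) (zeta : Omega -> R) :
  (2 <= #|X|)%N ->
  psd_kernel k ->
  0 < noise2 ->
  (1 <= t)%N ->
  gaussian_vector P F (gp_mean k noise2 xs ys) (gp_cov k noise2 xs) ->
  shifted_exponential P zeta (2 * ln (#|X|%:R / 2)) (2^-1) ->
  (\int[P]_w (fmax (F w))%:E <=
   \int[P]_w (fmax (fun x => gp_mean k noise2 xs ys x
                     + Num.sqrt (zeta w) * gp_sd k noise2 xs x))%:E)%E.
Proof.
(* Only the Gaussianity of the posterior matters: the kernel, the noise level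
   and [t] play no further role. *)
move=> X2 _ _ _ gaussF zeta_law.
have [x1 _] : exists x1 : X, x1 \in X by apply/card_gt0P; exact: leq_trans X2.
exact: expectation_fmax_le_ucb P x1 _ _ _ gaussF _ zeta_law.
Qed.
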